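(* Let $F_1:\mathbf{Sets}\times\mathbf{Sets}\to\mathbf{Sets}\times\mathbf{Sets}$ be the functor $F_1(V,E)=(1,\mathcal{P}(V\uplus E))$ (acting on morphisms by the unique map into $1$ and by $\mathcal{P}(f_V\uplus f_E)$). Let $\mathcal{M}$ be the class of morphisms $\langle f_V,f_E\rangle$ of $F_1$-coalgebras with $f_V$ and $f_E$ both injective. Then $(\mathbf{Coalg}_{F_1},\mathcal{M})$ is an $\mathcal{M}$-adhesive category.
   Context: $1$ denotes a terminal (one-element) set and $\uplus$ disjoint union; $\mathcal{P}$ is the covariant powerset functor ($\mathcal{P}(f)(X)=f(X)$). An $F_1$-coalgebra is an object $(V,E)$ of $\mathbf{Sets}\times\mathbf{Sets}$ with a morphism $(V,E)\to F_1(V,E)$, i.e. essentially a function $c:E\to\mathcal{P}(V\uplus E)$ (graphs with nested hyperedges); morphisms are pairs $(f_V,f_E)$ commuting with the structure maps. A pair $(\mathbf{C},\mathcal{M})$ with $\mathcal{M}$ a class of monomorphisms is $\mathcal{M}$-adhesive if $\mathcal{M}$ contains identities and is closed under composition, pushouts and pullbacks along $\mathcal{M}$-morphisms exist and $\mathcal{M}$ is stable under them, and pushouts along $\mathcal{M}$-morphisms are vertical weak van Kampen squares (for any commutative cube with such a pushout as bottom, pullbacks as back faces and all vertical morphisms in $\mathcal{M}$, the top face is a pushout iff the front faces are pullbacks). *)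

From Stdlib Require Import FunctionalExtensionality PropExtensionality.
Set Implicit Arguments.

Definition pimage (X Y : Type) (f : X -> Y) (S : X -> Prop) : Y -> Prop :=
  fun y => exists x, S x /\ f x = y.

Definition sum_map (A B C D : Type) (f : A -> C) (g : B -> D) (x : A + B) : C + D :=
  match x with inl a => inl (f a) | inr b => inr (g b) end.

(** An F_1-coalgebra (V,E) -> (1, P(V ⊎ E)); the V-component into 1 is
    unique, so the structure is the map c : E -> P(V ⊎ E). *)
Record coalg := Coalg {
  cV : Type;
  cE : Type;
  cstr : cE -> (cV + cE) -> Prop }.

(** Coalgebra morphisms: pairs (f_V, f_E) commuting with the structure maps,
    i.e. c_B ∘ f_E = P(f_V ⊎ f_E) ∘ c_A (the 1-component commutes trivially). *)
Record hom (A B : coalg) := Hom {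
  hV : cV A -> cV B;
  hE : cE A -> cE B;
  hcomm : forall e, cstr B (hE e) = pimage (sum_map hV hE) (cstr A e) }.

Arguments hV {A B} h _.
Arguments hE {A B} h _.

Definition heq (A B : coalg) (f g : hom A B) : Prop :=
  (forall x, hV f x = hV g x) /\ (forall e, hE f e = hE g e).

Lemma hcomp_comm (A B C : coalg) (g : hom B C) (f : hom A B) (e : cE A) :
  cstr C (hE g (hE f e)) =
  pimage (sum_map (fun x => hV g (hV f x)) (fun x => hE g (hE f x))) (cstr A e).
Proof.
  rewrite (hcomm g), (hcomm f).
  apply functional_extensionality; intros y; apply propositional_extensionality.
  split.
  - intros [x [[z [Hz Hzx]] Hxy]]; subst.
    exists z; split; [exact Hz|]; destruct z; reflexivity.
  - intros [z [Hz Hzy]]; subst.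
    exists (sum_map (hV f) (hE f) z); split.
    + exists z; split; [exact Hz|reflexivity].
    + destruct z; reflexivity.
Qed.

Definition hcomp (A B C : coalg) (g : hom B C) (f : hom A B) : hom A C :=
  @Hom A C (fun x => hV g (hV f x)) (fun x => hE g (hE f x)) (hcomp_comm g f).

Lemma hid_comm (A : coalg) (e : cE A) :
  cstr A e = pimage (sum_map (fun x : cV A => x) (fun x : cE A => x)) (cstr A e).
Proof.
  apply functional_extensionality; intros y; apply propositional_extensionality.
  split.
  - intros H; exists y; split; [exact H|destruct y; reflexivity].
  - intros [z [Hz Hzy]]; subst; destruct z; exact Hz.
Qed.

Definition hid (A : coalg) : hom A A :=
  @Hom A A (fun x => x) (fun x => x) (@hid_comm A).

Definition injective (X Y : Type) (f : X -> Y) : Prop :=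
  forall x y, f x = f y -> x = y.

Definition inM (A B : coalg) (f : hom A B) : Prop :=
  injective (hV f) /\ injective (hE f).

Definition is_mono (A B : coalg) (f : hom A B) : Prop :=
  forall (X : coalg) (g1 g2 : hom X A), heq (hcomp f g1) (hcomp f g2) -> heq g1 g2.

(** Pullback square   A --f--> B
                      |g       |h
                      v        v
                      C --k--> D      (A, f, g) is a pullback of (h, k). *)
Definition is_pullback (A B C D : coalg)
  (f : hom A B) (g : hom A C) (h : hom B D) (k : hom C D) : Prop :=
  heq (hcomp h f) (hcomp k g) /\
  forall (X : coalg) (x1 : hom X B) (x2 : hom X C),
    heq (hcomp h x1) (hcomp k x2) ->
    exists u : hom X A,
      heq (hcomp f u) x1 /\ heq (hcomp g u) x2 /\
      forall u' : hom X A, heq (hcomp f u') x1 -> heq (hcomp g u') x2 -> heq u u'.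

(** Pushout square    A --f--> B
                      |g       |h
                      v        v
                      C --k--> D      (D, h, k) is a pushout of (f, g). *)
Definition is_pushout (A B C D : coalg)
  (f : hom A B) (g : hom A C) (h : hom B D) (k : hom C D) : Prop :=
  heq (hcomp h f) (hcomp k g) /\
  forall (X : coalg) (y1 : hom B X) (y2 : hom C X),
    heq (hcomp y1 f) (hcomp y2 g) ->
    exists u : hom D X,
      heq (hcomp u h) y1 /\ heq (hcomp u k) y2 /\
      forall u' : hom D X, heq (hcomp u' h) y1 -> heq (hcomp u' k) y2 -> heq u u'.

(** Vertical weak van Kampen property of a square (bottom face of a cube)
      A --m--> B        A' --m'--> B'
      |f       |g       |f'        |g'     vertical: a : A'->A, b : B'->B,
      v        v        v          v                 c : C'->C, d : D'->D
      C --n--> D        C' --n'--> D'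
    For every commutative cube with this bottom face, back faces pullbacks and
    all vertical morphisms in M: top face pushout <-> front faces pullbacks. *)
Definition vertical_weak_VK (A B C D : coalg)
  (m : hom A B) (f : hom A C) (g : hom B D) (n : hom C D) : Prop :=
  forall (A' B' C' D' : coalg)
    (m' : hom A' B') (f' : hom A' C') (g' : hom B' D') (n' : hom C' D')
    (a : hom A' A) (b : hom B' B) (c : hom C' C) (d : hom D' D),
    heq (hcomp g' m') (hcomp n' f') ->
    heq (hcomp d g') (hcomp g b) ->
    heq (hcomp d n') (hcomp n c) ->
    (* back faces are pullbacks (these include their commutativity) *)
    is_pullback m' a b m ->
    is_pullback f' a c f ->
    inM a -> inM b -> inM c -> inM d ->
    (is_pushout m' f' g' n' <-> (is_pullback g' b d g /\ is_pullback n' c d n)).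

Definition M_adhesive_Coalg_F1 : Prop :=
  (forall (A B : coalg) (f : hom A B), inM f -> is_mono f) /\
  (forall A : coalg, inM (hid A)) /\
  (forall (A B C : coalg) (f : hom A B) (g : hom B C),
      inM f -> inM g -> inM (hcomp g f)) /\
  (forall (A B C : coalg) (m : hom A B) (f : hom A C), inM m ->
      exists (D : coalg) (g : hom B D) (n : hom C D), is_pushout m f g n) /\
  (forall (B C D : coalg) (m : hom B D) (k : hom C D), inM m ->
      exists (A : coalg) (f : hom A B) (g : hom A C), is_pullback f g m k) /\
  (forall (A B C D : coalg) (m : hom A B) (f : hom A C) (g : hom B D) (n : hom C D),
      is_pushout m f g n -> inM m -> inM n) /\
  (forall (A B C D : coalg) (f : hom A B) (g : hom A C) (h : hom B D) (k : hom C D),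
      is_pullback f g h k -> inM h -> inM g) /\
  (forall (A B C D : coalg) (m : hom A B) (f : hom A C) (g : hom B D) (n : hom C D),
      is_pushout m f g n -> inM m -> vertical_weak_VK m f g n).

From Stdlib Require Import FunctionalExtensionality PropExtensionality.
From Stdlib Require Import ClassicalEpsilon ProofIrrelevance.
Set Implicit Arguments.

(* Along an injective map, pullbacks and pushouts of F_1-coalgebras can be
   computed componentwise in Sets: images under an injection cancel, so the
   pullback inherits its structure from one leg, and in the pushout
   C + (B \ m(A)) every new edge keeps the pushed-forward structure it had in B.
   Comparing an arbitrary pullback (pushout) along M with these canonical ones
   shows that a square is a pullback (pushout) along M iff its vertex square and
   its edge square are pullbacks (pushouts) along injections in Sets.  Every
   axiom of M-adhesivity thereby reduces to the corresponding elementwise fact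
   about Sets, the van Kampen property included. *)

Lemma sum_map_injective (A B C D : Type) (f : A -> C) (g : B -> D) :
  injective f -> injective g -> injective (sum_map f g).
Proof.
  intros Hf Hg [x|x] [y|y] E; simpl in E; try discriminate;
    injection E as E; f_equal; auto.
Qed.

Lemma pimage_comp (X Y Z : Type) (f : X -> Y) (g : Y -> Z) (S : X -> Prop) :
  pimage g (pimage f S) = pimage (fun x => g (f x)) S.
Proof.
  apply functional_extensionality; intro z; apply propositional_extensionality; split.
  - intros [y [[x [Sx <-]] <-]]; exists x; auto.
  - intros [x [Sx <-]]; exists (f x); split; [exists x|]; auto.
Qed.

Lemma pimage_ext (X Y : Type) (f g : X -> Y) (S : X -> Prop) :
  (forall x, f x = g x) -> pimage f S = pimage g S.
Proof.
  intro E; replace g with f by (apply functional_extensionality; exact E); reflexivity.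
Qed.

Lemma pimage_injective (X Y : Type) (f : X -> Y) (S T : X -> Prop) :
  injective f -> pimage f S = pimage f T -> S = T.
Proof.
  intros Hf E.
  assert (Hsub : forall S T, pimage f S = pimage f T -> forall x, S x -> T x).
  { clear S T E; intros S T E x Sx.
    assert (Hx : pimage f T (f x)) by (rewrite <- E; exists x; auto).
    destruct Hx as [y [Ty Hy]]; apply Hf in Hy; subst; exact Ty. }
  apply functional_extensionality; intro x; apply propositional_extensionality.
  split; apply Hsub; auto.
Qed.

(** * Squares in Sets along injections *)

(* For injective h, a square h o f = k o g is a pullback in Sets iff it has
   these properties: g identifies A with the preimage under k of the range of h. *)
Record inj_pullback (A B C D : Type)
    (f : A -> B) (g : A -> C) (h : B -> D) (k : C -> D) : Prop := {
  ipb_comm : forall a, h (f a) = k (g a);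
  ipb_inj : injective g;
  ipb_lift : forall b c, h b = k c -> exists a, g a = c }.

(* For injective m, a square g o m = n o f is a pushout in Sets iff it has
   these properties: D is C together with a copy of B minus the range of m. *)
Record inj_pushout (A B C D : Type)
    (m : A -> B) (f : A -> C) (g : B -> D) (n : C -> D) : Prop := {
  ipo_comm : forall a, g (m a) = n (f a);
  ipo_cover : forall d, (exists b, g b = d) \/ (exists c, n c = d);
  ipo_inj : injective n;
  ipo_glue : forall b c, g b = n c -> exists a, b = m a /\ f a = c;
  ipo_ident : forall b1 b2, g b1 = g b2 ->
    b1 = b2 \/ exists a1 a2, b1 = m a1 /\ b2 = m a2 /\ f a1 = f a2 }.

Definition pb_set (B C D : Type) (h : B -> D) (k : C -> D) : Type :=
  {bc : B * C | h (fst bc) = k (snd bc)}.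

Definition pb_fst (B C D : Type) (h : B -> D) (k : C -> D) (p : pb_set h k) : B :=
  fst (proj1_sig p).

Definition pb_snd (B C D : Type) (h : B -> D) (k : C -> D) (p : pb_set h k) : C :=
  snd (proj1_sig p).

Lemma pb_set_inj_pullback (B C D : Type) (h : B -> D) (k : C -> D) :
  injective h -> inj_pullback (@pb_fst _ _ _ h k) (@pb_snd _ _ _ h k) h k.
Proof.
  intro Hh; split.
  - intros [bc E]; exact E.
  - intros [[b1 c1] E1] [[b2 c2] E2] Ec; unfold pb_snd in Ec; simpl in *; subst c2.
    assert (b1 = b2) by (apply Hh; congruence); subst b2.
    f_equal; apply proof_irrelevance.
  - intros b c E; exists (exist _ (b, c) E); reflexivity.
Qed.

Lemma inj_pullback_transfer (A P B C D : Type) (f : A -> B) (g : A -> C)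
    (h : B -> D) (k : C -> D) (fP : P -> B) (gP : P -> C) (phi : A -> P) (psi : P -> A) :
  inj_pullback fP gP h k -> (forall a, h (f a) = k (g a)) ->
  injective phi -> (forall a, gP (phi a) = g a) -> (forall p, g (psi p) = gP p) ->
  inj_pullback f g h k.
Proof.
  intros HP Hc Hphi HgP Hg; split; [exact Hc| |].
  - intros a1 a2 E; apply Hphi, (ipb_inj HP); rewrite !HgP; exact E.
  - intros b c E; destruct (ipb_lift HP _ _ E) as [p <-]; exists (psi p); apply Hg.
Qed.

Definition po_set (A B : Type) (m : A -> B) (C : Type) : Type :=
  (C + {b : B | ~ exists a, m a = b})%type.

Definition po_glue (A B C : Type) (m : A -> B) (f : A -> C) (b : B) : po_set m C :=
  match excluded_middle_informative (exists a, m a = b) with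
  | left H => inl (f (proj1_sig (constructive_indefinite_description _ H)))
  | right H => inr (exist _ b H)
  end.

Lemma po_glue_image (A B C : Type) (m : A -> B) (f : A -> C) (a : A) :
  injective m -> po_glue m f (m a) = inl (f a).
Proof.
  intro Hm; unfold po_glue.
  destruct (excluded_middle_informative _) as [H|H]; [|exfalso; apply H; exists a; auto].
  destruct (constructive_indefinite_description _ H) as [a' E]; simpl.
  apply Hm in E; subst; reflexivity.
Qed.

Lemma po_glue_not_image (A B C : Type) (m : A -> B) (f : A -> C) (b : B)
    (H : ~ exists a, m a = b) :
  po_glue m f b = inr (exist _ b H).
Proof.
  unfold po_glue; destruct (excluded_middle_informative _) as [H'|H']; [contradiction|].
  f_equal; f_equal; apply proof_irrelevance.
Qed.

Lemma po_set_inj_pushout (A B C : Type) (m : A -> B) (f : A -> C) :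
  injective m -> inj_pushout m f (po_glue m f) inl.
Proof.
  intro Hm; split.
  - intro a; apply po_glue_image; exact Hm.
  - intros [c|[b H]]; [right; exists c; reflexivity|].
    left; exists b; apply po_glue_not_image.
  - intros c1 c2 E; injection E; auto.
  - intros b c E; destruct (classic (exists a, m a = b)) as [[a <-]|H].
    + rewrite po_glue_image in E by exact Hm; injection E; eauto.
    + rewrite (po_glue_not_image m f H) in E; discriminate.
  - intros b1 b2 E.
    destruct (classic (exists a, m a = b1)) as [[a1 <-]|H1];
      destruct (classic (exists a, m a = b2)) as [[a2 <-]|H2];
      rewrite ?po_glue_image, ?(po_glue_not_image m f H1), ?(po_glue_not_image m f H2) in E
        by exact Hm; try discriminate.
    + right; exists a1, a2; injection E; auto.
    + left; injection E; auto.
Qed.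

Lemma inj_pushout_transfer (A B C D Q : Type) (m : A -> B) (f : A -> C)
    (g : B -> D) (n : C -> D) (gQ : B -> Q) (nQ : C -> Q) (phi : D -> Q) :
  inj_pushout m f gQ nQ -> (forall a, g (m a) = n (f a)) -> injective phi ->
  (forall b, phi (g b) = gQ b) -> (forall c, phi (n c) = nQ c) ->
  inj_pushout m f g n.
Proof.
  intros HQ Hc Hphi Hg Hn; split; [exact Hc| | | |].
  - intro d; destruct (ipo_cover HQ (phi d)) as [[b E]|[c E]];
      [left; exists b|right; exists c]; apply Hphi; rewrite ?Hg, ?Hn; exact E.
  - intros c1 c2 E; apply (ipo_inj HQ); rewrite <- !Hn, E; reflexivity.
  - intros b c E; apply (ipo_glue HQ); rewrite <- Hg, <- Hn, E; reflexivity.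
  - intros b1 b2 E; apply (ipo_ident HQ); rewrite <- !Hg, E; reflexivity.
Qed.

Lemma inj_pushout_desc (A B C D X : Type) (m : A -> B) (f : A -> C)
    (g : B -> D) (n : C -> D) (y1 : B -> X) (y2 : C -> X) :
  inj_pushout m f g n -> (forall a, y1 (m a) = y2 (f a)) ->
  exists u : D -> X, (forall b, u (g b) = y1 b) /\ (forall c, u (n c) = y2 c).
Proof.
  intros Hpo Hy.
  assert (Hdesc : forall d, exists x,
             (forall b, g b = d -> y1 b = x) /\ (forall c, n c = d -> y2 c = x)).
  { intro d; destruct (ipo_cover Hpo d) as [[b <-]|[c <-]].
    - exists (y1 b); split.
      + intros b' E; destruct (ipo_ident Hpo _ _ E) as [<-|[a1 [a2 [-> [-> Ea]]]]];
          [|rewrite !Hy, Ea]; reflexivity.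
      + intros c E; destruct (ipo_glue Hpo _ _ (eq_sym E)) as [a [-> <-]]; auto.
    - exists (y2 c); split.
      + intros b E; destruct (ipo_glue Hpo _ _ E) as [a [-> <-]]; auto.
      + intros c' E; apply (ipo_inj Hpo) in E; subst; reflexivity. }
  destruct (choice _ Hdesc) as [u Hu].
  exists u; split; [intro b|intro c]; symmetry; apply (Hu _); reflexivity.
Qed.

Section SetVanKampen.

Variables (A B C D A' B' C' D' : Type).
Variables (m : A -> B) (f : A -> C) (g : B -> D) (n : C -> D).
Variables (m' : A' -> B') (f' : A' -> C') (g' : B' -> D') (n' : C' -> D').
Variables (a : A' -> A) (b : B' -> B) (c : C' -> C) (d : D' -> D).
Hypothesis top_comm : forall x, g' (m' x) = n' (f' x).
Hypothesis right_comm : forall x, d (g' x) = g (b x).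
Hypothesis left_comm : forall x, d (n' x) = n (c x).
Hypothesis back_right : inj_pullback m' a b m.
Hypothesis back_left : inj_pullback f' a c f.
Hypotheses (b_inj : injective b) (c_inj : injective c) (d_inj : injective d).
Hypothesis bottom : inj_pushout m f g n.

Lemma top_pushout_front_right : inj_pushout m' f' g' n' -> inj_pullback g' b d g.
Proof.
  intro top; split; [exact right_comm|exact b_inj|].
  intros z y Ez; destruct (ipo_cover top z) as [[y' <-]|[x' <-]].
  - rewrite right_comm in Ez.
    destruct (ipo_ident bottom _ _ Ez) as [<-|[a1 [a2 [E1 [-> E3]]]]]; [exists y'; auto|].
    destruct (ipb_lift back_right _ _ E1) as [a1' <-].
    rewrite <- (ipb_comm back_left) in E3.
    destruct (ipb_lift back_left _ _ E3) as [a2' <-].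
    exists (m' a2'); apply (ipb_comm back_right).
  - rewrite left_comm in Ez.
    destruct (ipo_glue bottom _ _ (eq_sym Ez)) as [a1 [-> E2]].
    destruct (ipb_lift back_left _ _ (eq_sym E2)) as [a1' <-].
    exists (m' a1'); apply (ipb_comm back_right).
Qed.

Lemma top_pushout_front_left : inj_pushout m' f' g' n' -> inj_pullback n' c d n.
Proof.
  intro top; split; [exact left_comm|exact c_inj|].
  intros z x Ez; destruct (ipo_cover top z) as [[y' <-]|[x' <-]].
  - rewrite right_comm in Ez.
    destruct (ipo_glue bottom _ _ Ez) as [a1 [E1 <-]].
    destruct (ipb_lift back_right _ _ E1) as [a1' <-].
    exists (f' a1'); apply (ipb_comm back_left).
  - rewrite left_comm in Ez; exists x'; apply (ipo_inj bottom); exact Ez.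
Qed.

Lemma front_pullbacks_top_pushout :
  inj_pullback g' b d g -> inj_pullback n' c d n -> inj_pushout m' f' g' n'.
Proof.
  intros right left; split; [exact top_comm| | | |].
  - intro z; destruct (ipo_cover bottom (d z)) as [[y E]|[x E]].
    + destruct (ipb_lift right _ _ (eq_sym E)) as [y' <-].
      left; exists y'; apply d_inj; rewrite right_comm; exact E.
    + destruct (ipb_lift left _ _ (eq_sym E)) as [x' <-].
      right; exists x'; apply d_inj; rewrite left_comm; exact E.
  - intros x1 x2 E; apply c_inj, (ipo_inj bottom).
    rewrite <- !left_comm, E; reflexivity.
  - intros y' x' E.
    assert (E' : g (b y') = n (c x'))
      by (rewrite <- right_comm, <- left_comm, E; reflexivity).
    destruct (ipo_glue bottom _ _ E') as [a1 [E1 E2]].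
    destruct (ipb_lift back_right _ _ E1) as [a1' <-].
    exists a1'; split.
    + apply b_inj; rewrite (ipb_comm back_right); exact E1.
    + apply c_inj; rewrite (ipb_comm back_left); exact E2.
  - intros y1 y2 E.
    assert (E' : g (b y1) = g (b y2)) by (rewrite <- !right_comm, E; reflexivity).
    destruct (ipo_ident bottom _ _ E') as [Eb|[a1 [a2 [E1 [E2 E3]]]]];
      [left; apply b_inj; exact Eb|right].
    destruct (ipb_lift back_right _ _ E1) as [a1' <-].
    destruct (ipb_lift back_right _ _ E2) as [a2' <-].
    exists a1', a2'; repeat split.
    + apply b_inj; rewrite (ipb_comm back_right); exact E1.
    + apply b_inj; rewrite (ipb_comm back_right); exact E2.
    + apply c_inj; rewrite !(ipb_comm back_left); exact E3.
Qed.

Lemma set_vertical_VK :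
  inj_pushout m' f' g' n' <-> inj_pullback g' b d g /\ inj_pullback n' c d n.
Proof.
  split.
  - intro top; split; [apply top_pushout_front_right|apply top_pushout_front_left]; exact top.
  - intros [right left]; exact (front_pullbacks_top_pushout right left).
Qed.

End SetVanKampen.

(** * Coalgebras *)

Definition is_hom (X Y : coalg) (uV : cV X -> cV Y) (uE : cE X -> cE Y) : Prop :=
  forall e, cstr Y (uE e) = pimage (sum_map uV uE) (cstr X e).

Lemma is_hom_cancel (X B D : coalg) (h : hom B D) (uV : cV X -> cV B) (uE : cE X -> cE B) :
  inM h -> is_hom X D (fun x => hV h (uV x)) (fun e => hE h (uE e)) -> is_hom X B uV uE.
Proof.
  intros [HV HE] Hcomp e; apply (pimage_injective (sum_map_injective HV HE)).
  rewrite <- (hcomm h (uE e)), Hcomp, pimage_comp.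
  apply pimage_ext; intros [x|x]; reflexivity.
Qed.

Lemma section_inM (A B : coalg) (s : hom A B) (r : hom B A) :
  heq (hcomp r s) (hid A) -> inM s.
Proof.
  intros [EV EE]; split; intros x y Exy.
  - pose proof (EV x); pose proof (EV y); simpl in *; congruence.
  - pose proof (EE x); pose proof (EE y); simpl in *; congruence.
Qed.

Lemma is_pullback_sym (A B C D : coalg) (f : hom A B) (g : hom A C)
    (h : hom B D) (k : hom C D) :
  is_pullback f g h k -> is_pullback g f k h.
Proof.
  intros [[EV EE] Huniv]; split; [split; intro; symmetry; auto|].
  intros X x1 x2 [HV HE].
  destruct (Huniv X x2 x1) as [u [Hu1 [Hu2 Huniq]]]; [split; intro; symmetry; auto|].
  exists u; split; [|split]; auto.
Qed.

Lemma pullback_endo_id (A B C D : coalg) (f : hom A B) (g : hom A C)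
    (h : hom B D) (k : hom C D) (u : hom A A) :
  is_pullback f g h k -> heq (hcomp f u) f -> heq (hcomp g u) g -> heq u (hid A).
Proof.
  intros [Hc Huniv] Hf Hg.
  destruct (Huniv A f g Hc) as [u0 [_ [_ Huniq]]].
  destruct (Huniq u Hf Hg) as [EuV EuE].
  destruct (Huniq (hid A)) as [EidV EidE]; try (split; reflexivity).
  split; intro x; simpl in *; [rewrite <- EuV|rewrite <- EuE]; auto.
Qed.

Lemma pushout_endo_id (A B C D : coalg) (m : hom A B) (f : hom A C)
    (g : hom B D) (n : hom C D) (u : hom D D) :
  is_pushout m f g n -> heq (hcomp u g) g -> heq (hcomp u n) n -> heq u (hid D).
Proof.
  intros [Hc Huniv] Hg Hn.
  destruct (Huniv D g n Hc) as [u0 [_ [_ Huniq]]].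
  destruct (Huniq u Hg Hn) as [EuV EuE].
  destruct (Huniq (hid D)) as [EidV EidE]; try (split; reflexivity).
  split; intro x; simpl in *; [rewrite <- EuV|rewrite <- EuE]; auto.
Qed.

Lemma components_pullback (A B C D : coalg) (f : hom A B) (g : hom A C)
    (h : hom B D) (k : hom C D) :
  inM h ->
  inj_pullback (hV f) (hV g) (hV h) (hV k) -> inj_pullback (hE f) (hE g) (hE h) (hE k) ->
  is_pullback f g h k.
Proof.
  intros [HhV HhE] SV SE; split; [split; intro; apply ipb_comm; assumption|].
  intros X x1 x2 [HxV HxE].
  destruct (choice _ (fun x => ipb_lift SV _ _ (HxV x))) as [uV HuV].
  destruct (choice _ (fun e => ipb_lift SE _ _ (HxE e))) as [uE HuE].
  assert (Hu : is_hom X A uV uE).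
  { apply (is_hom_cancel (h := g)); [exact (conj (ipb_inj SV) (ipb_inj SE))|].
    intro e; rewrite HuE, (hcomm x2); apply pimage_ext; intros [x|x]; simpl; congruence. }
  exists (@Hom X A uV uE Hu); split; [|split].
  - split; intro x; simpl.
    + apply HhV; rewrite (ipb_comm SV), HuV; symmetry; apply HxV.
    + apply HhE; rewrite (ipb_comm SE), HuE; symmetry; apply HxE.
  - split; intro x; simpl; auto.
  - intros u' _ [Hu'V Hu'E]; split; intro x; simpl in *.
    + apply (ipb_inj SV); rewrite HuV, Hu'V; reflexivity.
    + apply (ipb_inj SE); rewrite HuE, Hu'E; reflexivity.
Qed.

(* Edges carry the structure of their C-component; the projection to B is a
   coalgebra morphism only when h is in M. *)
Definition pb_coalg (B C D : coalg) (h : hom B D) (k : hom C D) : coalg :=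
  {| cV := pb_set (hV h) (hV k);
     cE := pb_set (hE h) (hE k);
     cstr := fun e s =>
       cstr C (pb_snd e) (sum_map (@pb_snd _ _ _ _ _) (@pb_snd _ _ _ _ _) s) |}.

Lemma pb_snd_is_hom (B C D : coalg) (h : hom B D) (k : hom C D) :
  is_hom (pb_coalg h k) C (@pb_snd _ _ _ _ _) (@pb_snd _ _ _ _ _).
Proof.
  intros [[b c] Ebc]; cbn in Ebc |- *.
  apply functional_extensionality; intro s; apply propositional_extensionality; split.
  - intro Hs.
    assert (Hks : pimage (sum_map (hV k) (hE k)) (cstr C c) (sum_map (hV k) (hE k) s))
      by (exists s; auto).
    rewrite <- (hcomm k c), <- Ebc, (hcomm h b) in Hks.
    destruct Hks as [t [Ht Ets]].
    destruct s as [v|v], t as [w|w]; simpl in Ets; try discriminate; injection Ets as Ets.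
    + exists (inl (exist _ (w, v) Ets)); auto.
    + exists (inr (exist _ (w, v) Ets)); auto.
  - intros [s' [Hs' <-]]; exact Hs'.
Qed.

Definition pb_snd_hom (B C D : coalg) (h : hom B D) (k : hom C D) : hom (pb_coalg h k) C :=
  @Hom _ _ _ _ (@pb_snd_is_hom B C D h k).

Lemma pb_fst_is_hom (B C D : coalg) (h : hom B D) (k : hom C D) :
  inM h -> is_hom (pb_coalg h k) B (@pb_fst _ _ _ _ _) (@pb_fst _ _ _ _ _).
Proof.
  intro Hh; apply (is_hom_cancel (h := h)); [exact Hh|]; intro e.
  rewrite (proj2_sig e : hE h (pb_fst e) = hE k (pb_snd e)).
  rewrite (hcomm k), (pb_snd_is_hom e), pimage_comp.
  apply pimage_ext; intros [x|x]; cbn; f_equal; symmetry; exact (proj2_sig x).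
Qed.

Definition pb_fst_hom (B C D : coalg) (h : hom B D) (k : hom C D) (Hh : inM h) :
  hom (pb_coalg h k) B :=
  @Hom _ _ _ _ (pb_fst_is_hom (k := k) Hh).

Lemma pb_coalg_pullback (B C D : coalg) (h : hom B D) (k : hom C D) (Hh : inM h) :
  is_pullback (pb_fst_hom k Hh) (pb_snd_hom h k) h k.
Proof.
  apply components_pullback; [exact Hh| |]; apply pb_set_inj_pullback; apply Hh.
Qed.

Section PullbackComparison.

Variables (A B C D : coalg) (f : hom A B) (g : hom A C) (h : hom B D) (k : hom C D).
Hypotheses (Hh : inM h) (Hc : heq (hcomp h f) (hcomp k g)).

Definition pb_pair_V (x : cV A) : pb_set (hV h) (hV k) :=
  exist _ (hV f x, hV g x) (proj1 Hc x).

Definition pb_pair_E (e : cE A) : pb_set (hE h) (hE k) :=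
  exist _ (hE f e, hE g e) (proj2 Hc e).

Lemma pb_pair_is_hom : is_hom A (pb_coalg h k) pb_pair_V pb_pair_E.
Proof.
  apply (is_hom_cancel (h := pb_snd_hom h k)); [|exact (hcomm g)].
  destruct Hh as [HhV HhE].
  exact (conj (ipb_inj (pb_set_inj_pullback _ HhV)) (ipb_inj (pb_set_inj_pullback _ HhE))).
Qed.

Definition pb_pair : hom A (pb_coalg h k) := @Hom _ _ _ _ pb_pair_is_hom.

End PullbackComparison.

Lemma inM_pullback_components (A B C D : coalg) (f : hom A B) (g : hom A C)
    (h : hom B D) (k : hom C D) :
  inM h -> is_pullback f g h k ->
  inj_pullback (hV f) (hV g) (hV h) (hV k) /\ inj_pullback (hE f) (hE g) (hE h) (hE k).
Proof.
  intros Hh Hpb.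
  destruct (proj2 Hpb _ _ _ (proj1 (pb_coalg_pullback k Hh))) as [u [Hfu [Hgu _]]].
  pose (s := pb_pair Hh (proj1 Hpb)).
  assert (Hus : heq (hcomp u s) (hid A)).
  { apply (pullback_endo_id Hpb); split; intro x;
      [exact (proj1 Hfu _)|exact (proj2 Hfu _)|exact (proj1 Hgu _)|exact (proj2 Hgu _)]. }
  destruct (section_inM Hus) as [HsV HsE].
  split; eapply inj_pullback_transfer;
    [apply pb_set_inj_pullback, Hh|exact (proj1 (proj1 Hpb))|exact HsV
    |intro; reflexivity|exact (proj1 Hgu)
    |apply pb_set_inj_pullback, Hh|exact (proj2 (proj1 Hpb))|exact HsE
    |intro; reflexivity|exact (proj2 Hgu)].
Qed.

Lemma components_pushout (A B C D : coalg) (m : hom A B) (f : hom A C)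
    (g : hom B D) (n : hom C D) :
  inj_pushout (hV m) (hV f) (hV g) (hV n) -> inj_pushout (hE m) (hE f) (hE g) (hE n) ->
  is_pushout m f g n.
Proof.
  intros SV SE; split; [split; intro; apply ipo_comm; assumption|].
  intros X y1 y2 [HyV HyE].
  destruct (inj_pushout_desc (hV y1) (hV y2) SV HyV) as [uV [HuV1 HuV2]].
  destruct (inj_pushout_desc (hE y1) (hE y2) SE HyE) as [uE [HuE1 HuE2]].
  assert (Hu : is_hom D X uV uE).
  { intro e; destruct (ipo_cover SE e) as [[b <-]|[c <-]].
    - rewrite HuE1, (hcomm y1), (hcomm g), pimage_comp.
      apply pimage_ext; intros [x|x]; cbn; congruence.
    - rewrite HuE2, (hcomm y2), (hcomm n), pimage_comp.
      apply pimage_ext; intros [x|x]; cbn; congruence. }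
  exists (@Hom D X uV uE Hu); split; [|split].
  - split; intro; simpl; auto.
  - split; intro; simpl; auto.
  - intros u' [Hu'V1 Hu'E1] [Hu'V2 Hu'E2]; simpl in *; split.
    + intro d; destruct (ipo_cover SV d) as [[b <-]|[c <-]]; cbn; congruence.
    + intro d; destruct (ipo_cover SE d) as [[b <-]|[c <-]]; cbn; congruence.
Qed.

(* An edge of B outside the range of m keeps its structure, pushed forward
   along the gluing maps. *)
Definition po_coalg (A B C : coalg) (m : hom A B) (f : hom A C) : coalg :=
  {| cV := po_set (hV m) (cV C);
     cE := po_set (hE m) (cE C);
     cstr := fun e => match e with
       | inl c => pimage (sum_map inl inl) (cstr C c)
       | inr b => pimage (sum_map (po_glue (hV m) (hV f)) (po_glue (hE m) (hE f)))
                         (cstr B (proj1_sig b))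
       end |}.

Definition po_inl_hom (A B C : coalg) (m : hom A B) (f : hom A C) : hom C (po_coalg m f) :=
  @Hom C (po_coalg m f) inl inl (fun e => eq_refl).

Lemma po_glue_is_hom (A B C : coalg) (m : hom A B) (f : hom A C) :
  inM m -> is_hom B (po_coalg m f) (po_glue (hV m) (hV f)) (po_glue (hE m) (hE f)).
Proof.
  intros [HmV HmE] e; destruct (classic (exists a, hE m a = e)) as [[a <-]|H].
  - rewrite po_glue_image by exact HmE; simpl.
    rewrite (hcomm f), (hcomm m), !pimage_comp.
    apply pimage_ext; intros [x|x]; cbn; rewrite po_glue_image; auto.
  - rewrite (po_glue_not_image _ _ H); reflexivity.
Qed.

Definition po_glue_hom (A B C : coalg) (m : hom A B) (f : hom A C) (Hm : inM m) :
  hom B (po_coalg m f) :=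
  @Hom _ _ _ _ (po_glue_is_hom f Hm).

Lemma po_coalg_pushout (A B C : coalg) (m : hom A B) (f : hom A C) (Hm : inM m) :
  is_pushout m f (po_glue_hom f Hm) (po_inl_hom m f).
Proof.
  apply components_pushout; apply po_set_inj_pushout; apply Hm.
Qed.

Lemma inM_pushout_components (A B C D : coalg) (m : hom A B) (f : hom A C)
    (g : hom B D) (n : hom C D) :
  inM m -> is_pushout m f g n ->
  inj_pushout (hV m) (hV f) (hV g) (hV n) /\ inj_pushout (hE m) (hE f) (hE g) (hE n).
Proof.
  intros Hm Hpo.
  pose proof (po_coalg_pushout f Hm) as HQ.
  destruct (proj2 Hpo _ _ _ (proj1 HQ)) as [phi [Hphig [Hphin _]]].
  destruct (proj2 HQ _ _ _ (proj1 Hpo)) as [psi [Hpsig [Hpsin _]]].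
  assert (Hid : heq (hcomp psi phi) (hid D)).
  { apply (pushout_endo_id Hpo); split; intro x; simpl.
    - generalize (proj1 Hphig x) (proj1 Hpsig x); cbn; congruence.
    - generalize (proj2 Hphig x) (proj2 Hpsig x); cbn; congruence.
    - generalize (proj1 Hphin x) (proj1 Hpsin x); cbn; congruence.
    - generalize (proj2 Hphin x) (proj2 Hpsin x); cbn; congruence. }
  destruct (section_inM Hid) as [HphiV HphiE].
  split; eapply inj_pushout_transfer;
    [apply po_set_inj_pushout, Hm|exact (proj1 (proj1 Hpo))|exact HphiV
    |exact (proj1 Hphig)|exact (proj1 Hphin)
    |apply po_set_inj_pushout, Hm|exact (proj2 (proj1 Hpo))|exact HphiE
    |exact (proj2 Hphig)|exact (proj2 Hphin)].
Qed.

(** * The M-adhesivity axioms *)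

Lemma inM_mono (A B : coalg) (f : hom A B) : inM f -> is_mono f.
Proof.
  intros [HV HE] X g1 g2 [EV EE]; split; intro x; [apply HV, EV|apply HE, EE].
Qed.

Lemma inM_id (A : coalg) : inM (hid A).
Proof. split; intros x y E; exact E. Qed.

Lemma inM_comp (A B C : coalg) (f : hom A B) (g : hom B C) :
  inM f -> inM g -> inM (hcomp g f).
Proof.
  intros [HfV HfE] [HgV HgE]; split; intros x y E; [apply HfV, HgV, E|apply HfE, HgE, E].
Qed.

Lemma pushout_along_inM_exists (A B C : coalg) (m : hom A B) (f : hom A C) :
  inM m -> exists (D : coalg) (g : hom B D) (n : hom C D), is_pushout m f g n.
Proof.
  intro Hm; exists (po_coalg m f), (po_glue_hom f Hm), (po_inl_hom m f).
  apply po_coalg_pushout.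
Qed.

Lemma pullback_along_inM_exists (B C D : coalg) (h : hom B D) (k : hom C D) :
  inM h -> exists (A : coalg) (f : hom A B) (g : hom A C), is_pullback f g h k.
Proof.
  intro Hh; exists (pb_coalg h k), (pb_fst_hom k Hh), (pb_snd_hom h k).
  apply pb_coalg_pullback.
Qed.

Lemma inM_pushout_stable (A B C D : coalg) (m : hom A B) (f : hom A C)
    (g : hom B D) (n : hom C D) :
  is_pushout m f g n -> inM m -> inM n.
Proof.
  intros Hpo Hm; destruct (inM_pushout_components Hm Hpo) as [SV SE].
  exact (conj (ipo_inj SV) (ipo_inj SE)).
Qed.

Lemma inM_pullback_stable (A B C D : coalg) (f : hom A B) (g : hom A C)
    (h : hom B D) (k : hom C D) :
  is_pullback f g h k -> inM h -> inM g.
Proof.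
  intros Hpb Hh; destruct (inM_pullback_components Hh Hpb) as [SV SE].
  exact (conj (ipb_inj SV) (ipb_inj SE)).
Qed.

Lemma pushout_along_inM_vertical_weak_VK (A B C D : coalg) (m : hom A B)
    (f : hom A C) (g : hom B D) (n : hom C D) :
  is_pushout m f g n -> inM m -> vertical_weak_VK m f g n.
Proof.
  intros Hpo Hm A' B' C' D' m' f' g' n' a b c d [T1 T2] [G1 G2] [N1 N2] Hback_r Hback_l
    _ Hb Hc Hd.
  destruct (inM_pushout_components Hm Hpo) as [OV OE].
  destruct (inM_pullback_components Hb Hback_r) as [RV RE].
  destruct (inM_pullback_components Hc Hback_l) as [LV LE].
  pose proof (set_vertical_VK (hV g') (hV n') (b := hV b) (c := hV c) (d := hV d)
                T1 G1 N1 RV LV (proj1 Hb) (proj1 Hc) (proj1 Hd) OV) as VKV.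
  pose proof (set_vertical_VK (hE g') (hE n') (b := hE b) (c := hE c) (d := hE d)
                T2 G2 N2 RE LE (proj2 Hb) (proj2 Hc) (proj2 Hd) OE) as VKE.
  split.
  - intro Htop.
    assert (Hm' : inM m') by exact (inM_pullback_stable (is_pullback_sym Hback_r) Hm).
    destruct (inM_pushout_components Hm' Htop) as [TV TE].
    destruct (proj1 VKV TV) as [FRV FLV], (proj1 VKE TE) as [FRE FLE].
    split; apply components_pullback; assumption.
  - intros [Hfront_r Hfront_l].
    destruct (inM_pullback_components Hd Hfront_r) as [FRV FRE].
    destruct (inM_pullback_components Hd Hfront_l) as [FLV FLE].
    apply components_pushout; [apply VKV|apply VKE]; split; assumption.
Qed.

Theorem mainTheorem9 : M_adhesive_Coalg_F1.
Proof.
  exact (conj inM_mono (conj inM_id (conj inM_comp (conj pushout_along_inM_exists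
    (conj pullback_along_inM_exists (conj inM_pushout_stable (conj inM_pullback_stable
      pushout_along_inM_vertical_weak_VK))))))).
Qed.
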